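(* Let $F$ be a field with $\mathrm{char}\,F\neq 2$ and let $n>1$ be an integer. Let $I_n$ be the $F$-algebra defined in the context. Then the automorphism group of $I_n$ is isomorphic to the orthogonal group $O_{n-1}(F)=\{A\in M_{n-1}(F)\mid AA^T=A^TA=E\}$, and the Lie algebra of derivations of $I_n$ is isomorphic to the orthogonal Lie algebra $\mathfrak{o}_{n-1}(F)=\{A\in M_{n-1}(F)\mid A^T=-A\}$.
   Context: $I_n$ denotes the $n$-dimensional (non-associative) algebra over $F$ with basis $e_1,\ldots,e_n$ and multiplication given by $e_n\cdot e_n=2e_n$, $e_n\cdot e_j=e_j$, $e_j\cdot e_j=e_n$ for $j=1,\ldots,n-1$, with all other products of basis elements equal to zero (extended bilinearly). It is a pre-Lie algebra, i.e. $(xy)z-x(yz)=(yx)z-y(xz)$ for all $x,y,z$. A derivation is a linear map $d$ with $d(xy)=d(x)y+xd(y)$. $E$ denotes the identity matrix. *)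

From HB Require Import structures.
From mathcomp Require Import all_boot all_order all_algebra.
Set Implicit Arguments. Unset Strict Implicit. Unset Printing Implicit Defensive.
Import GRing.Theory.
Local Open Scope ring_scope.

(* The algebra I_n with n = m.+1.  Basis vectors e_1,...,e_n are the
   standard column vectors delta_mx k 0 of 'cV[F]_(m.+1), k : 'I_(m.+1);
   the distinguished basis vector e_n is indexed by ord_max. *)
Section In.
Variables (F : fieldType) (m : nat).
Local Notation n := m.+1.

Definition ebas (k : 'I_n) : 'cV[F]_n := delta_mx k 0.

Definition In_basis_mul (i j : 'I_n) : 'cV[F]_n :=
  if (i == ord_max) && (j == ord_max) then 2%:R *: ebas ord_max
  else if i == ord_max then ebas j
  else if i == j then ebas ord_max
  else 0.

Definition In_mul (x y : 'cV[F]_n) : 'cV[F]_n :=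
  \sum_(i < n) \sum_(j < n) (x i 0 * y j 0) *: In_basis_mul i j.

(* linear endomorphisms of F^n are represented by matrices acting on
   column vectors (v |-> A *m v), so composition is matrix product. *)
Definition is_automorphism (A : 'M[F]_n) : Prop :=
  A \in unitmx /\
  forall x y, A *m In_mul x y = In_mul (A *m x) (A *m y).

Definition is_derivation (D : 'M[F]_n) : Prop :=
  forall x y, D *m In_mul x y = In_mul (D *m x) y + In_mul x (D *m y).
End In.

Definition is_orth_mx (F : fieldType) (k : nat) (A : 'M[F]_k) : Prop :=
  A *m A^T = 1%:M /\ A^T *m A = 1%:M.

Definition is_skew_mx (F : fieldType) (k : nat) (A : 'M[F]_k) : Prop :=
  A^T = - A.

Definition lie_bracket (F : fieldType) (k : nat) (A B : 'M[F]_k) : 'M[F]_k :=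
  A *m B - B *m A.

Definition group_iso (F : fieldType) (k l : nat)
  (G : 'M[F]_k -> Prop) (H : 'M[F]_l -> Prop) (phi : 'M[F]_k -> 'M[F]_l) : Prop :=
  (forall A, G A -> H (phi A)) /\
  (forall A B, G A -> G B -> phi A = phi B -> A = B) /\
  (forall B, H B -> exists A, G A /\ phi A = B) /\
  (forall A B, G A -> G B -> phi (A *m B) = phi A *m phi B).

Definition lie_iso (F : fieldType) (k l : nat)
  (L : 'M[F]_k -> Prop) (M : 'M[F]_l -> Prop) (phi : 'M[F]_k -> 'M[F]_l) : Prop :=
  (forall A, L A -> M (phi A)) /\
  (forall A B, L A -> L B -> phi A = phi B -> A = B) /\
  (forall B, M B -> exists A, L A /\ phi A = B) /\
  (forall (a : F) A B, L A -> L B -> phi (a *: A + B) = a *: phi A + phi B) /\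
  (forall A B, L A -> L B -> phi (lie_bracket A B) = lie_bracket (phi A) (phi B)).

(* In coordinates the product of I_n is  x y = x_n y + <x, y> e_n,  where
   <x, y> = x^T y is the standard symmetric form on F^n.  An automorphism A
   must fix e_n, and then comparing the e_n-components of A(xy) and (Ax)(Ay)
   shows that A preserves <-,->; so Aut(I_n) is the stabiliser of e_n in
   O_n(F), i.e. the matrices diag(Q, 1) with Q in O_{n-1}(F).  Likewise a
   derivation kills e_n (this uses char F <> 2) and is skew for <-,->, so
   Der(I_n) consists of the matrices diag(S, 0) with S skew.  In both cases
   the upper-left (n-1) x (n-1) block is the required isomorphism. *)

From HB Require Import structures.
From mathcomp Require Import all_boot all_order all_algebra.
Set Implicit Arguments. Unset Strict Implicit. Unset Printing Implicit Defensive.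
Import GRing.Theory.
Local Open Scope ring_scope.

Section InAlgebra.
Variables (F : fieldType) (m : nat).
Local Notation n := m.+1.
Local Notation e := (ebas F ord_max).

Lemma ebasE (k i : 'I_n) : ebas F k i 0 = (i == k)%:R.
Proof. by rewrite mxE andbT. Qed.

Lemma cV_sum_ebas (y : 'cV[F]_n) : y = \sum_k y k 0 *: ebas F k.
Proof.
by rewrite {1}[y]matrix_sum_delta; apply: eq_bigr => k _; rewrite big_ord1.
Qed.

Lemma mulmx_ebas p (A : 'M[F]_(p, n)) (k : 'I_n) : A *m ebas F k = col k A.
Proof. by rewrite colE. Qed.

Lemma dot_ebasl (k : 'I_n) (x : 'cV[F]_n) : ((ebas F k)^T *m x) 0 0 = x k 0.
Proof. by rewrite trmx_delta -rowE mxE. Qed.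

Lemma dot_ebasr (k : 'I_n) (x : 'cV[F]_n) : (x^T *m ebas F k) 0 0 = x k 0.
Proof. by rewrite mulmx_ebas !mxE. Qed.

Lemma scale_ebasI (k : 'I_n) (c d : F) : c *: ebas F k = d *: ebas F k -> c = d.
Proof. by move/matrixP/(_ k 0); rewrite !mxE !eqxx !mulr1. Qed.

Lemma form_inj (M N : 'M[F]_n) :
  (forall x y : 'cV[F]_n, (x^T *m M *m y) 0 0 = (x^T *m N *m y) 0 0) -> M = N.
Proof.
move=> MN; apply/matrixP => i j.
by have := MN (ebas F i) (ebas F j); rewrite -!mulmxA !mulmx_ebas !dot_ebasl !mxE.
Qed.

Lemma In_basis_mulE (i j : 'I_n) :
  In_basis_mul F i j = (i == ord_max)%:R *: ebas F j + (i == j)%:R *: e.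
Proof.
rewrite /In_basis_mul; case: (i =P ord_max) => [->|_] /=.
  case: (j =P ord_max) => [->|/eqP]; first by rewrite eqxx -scalerDl.
  by rewrite eq_sym => /negPf ->; rewrite scale1r scale0r addr0.
by rewrite scale0r add0r; case: (i =P j); rewrite ?scale1r ?scale0r.
Qed.

Lemma In_mulE (x y : 'cV[F]_n) :
  In_mul x y = x ord_max 0 *: y + (x^T *m y) 0 0 *: e.
Proof.
rewrite /In_mul.
under eq_bigr do under eq_bigr do rewrite In_basis_mulE scalerDr !scalerA.
under eq_bigr do rewrite big_split /=; rewrite big_split /=; congr (_ + _).
  rewrite (bigD1 ord_max) //= [X in _ + X]big1 ?addr0 => [|i /negPf ->]; last first.
    by rewrite big1 // => j _; rewrite mulr0 scale0r.
  rewrite [y in RHS]cV_sum_ebas scaler_sumr; apply: eq_bigr => j _.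
  by rewrite eqxx mulr1 scalerA.
under eq_bigr do rewrite -scaler_suml.
rewrite -scaler_suml mxE; congr (_ *: _); apply: eq_bigr => i _.
rewrite (bigD1 i) //= [X in _ + X]big1 ?addr0 => [|j /negPf]; last first.
  by rewrite eq_sym => ->; rewrite mulr0.
by rewrite eqxx mulr1 mxE.
Qed.

Lemma mulmx_In_mul (A : 'M[F]_n) (x y : 'cV[F]_n) :
  A *m In_mul x y = x ord_max 0 *: (A *m y) + (x^T *m y) 0 0 *: (A *m e).
Proof. by rewrite In_mulE mulmxDr !scalemxAr. Qed.

(* diag(Q, c), with c in the position of e_n *)
Definition bdiag_mx (Q : 'M[F]_m) (c : F) : 'M[F]_n :=
  \matrix_(i, j) match unlift ord_max i, unlift ord_max j with
    | Some a, Some b => Q a b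
    | None, None => c
    | _, _ => 0
    end.

Definition corner_mx (A : 'M[F]_n) : 'M[F]_m := mxsub (lift ord_max) (lift ord_max) A.

HB.instance Definition _ :=
  GRing.Linear.copy corner_mx (mxsub (lift ord_max) (lift ord_max) : 'M[F]_n -> 'M[F]_m).

Lemma trmx_corner (A : 'M[F]_n) : (corner_mx A)^T = corner_mx A^T.
Proof. exact: trmx_mxsub. Qed.

Lemma bdiag_mx_lift Q c i j : bdiag_mx Q c (lift ord_max i) (lift ord_max j) = Q i j.
Proof. by rewrite mxE !liftK. Qed.

Lemma bdiag_mx_lift_max Q c i : bdiag_mx Q c (lift ord_max i) ord_max = 0.
Proof. by rewrite mxE liftK unlift_none. Qed.

Lemma bdiag_mx_max_lift Q c j : bdiag_mx Q c ord_max (lift ord_max j) = 0.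
Proof. by rewrite mxE liftK unlift_none. Qed.

Lemma bdiag_mx_max Q c : bdiag_mx Q c ord_max ord_max = c.
Proof. by rewrite mxE unlift_none. Qed.

Lemma corner_bdiag Q c : corner_mx (bdiag_mx Q c) = Q.
Proof. by apply/matrixP => i j; rewrite mxE bdiag_mx_lift. Qed.

Lemma bdiag_corner (A : 'M[F]_n) c :
  A *m e = c *: e -> A^T *m e = c *: e -> A = bdiag_mx (corner_mx A) c.
Proof.
move=> /matrixP Ae /matrixP Ate.
have Acol k : A k ord_max = c * (k == ord_max)%:R.
  by have := Ae k 0; rewrite mulmx_ebas !mxE andbT.
have Arow k : A ord_max k = c * (k == ord_max)%:R.
  by have := Ate k 0; rewrite mulmx_ebas !mxE andbT.
apply/matrixP => i j.
case: (unliftP ord_max i) => [a|] ->; case: (unliftP ord_max j) => [b|] ->.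
- by rewrite bdiag_mx_lift mxE.
- by rewrite bdiag_mx_lift_max Acol lift_eqF mulr0.
- by rewrite bdiag_mx_max_lift Arow lift_eqF mulr0.
- by rewrite bdiag_mx_max Acol eqxx mulr1.
Qed.

Lemma bdiag_mx_ebas Q c : bdiag_mx Q c *m e = c *: e.
Proof.
apply/matrixP => i j; rewrite ord1 mulmx_ebas mxE [RHS]mxE ebasE.
case: (unliftP ord_max i) => [a|] ->; first by rewrite bdiag_mx_lift_max lift_eqF mulr0.
by rewrite bdiag_mx_max eqxx mulr1.
Qed.

Lemma trmx_bdiag Q c : (bdiag_mx Q c)^T = bdiag_mx Q^T c.
Proof.
apply/matrixP => i j; rewrite !mxE.
by case: (unlift ord_max i) => [a|]; case: (unlift ord_max j) => [b|]; rewrite ?mxE.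
Qed.

Lemma bdiag_mxN Q c : bdiag_mx (- Q) (- c) = - bdiag_mx Q c.
Proof.
apply/matrixP => i j; rewrite !mxE.
by case: (unlift ord_max i) => [a|]; case: (unlift ord_max j) => [b|]; rewrite ?mxE ?oppr0.
Qed.

Lemma bdiag_mx1 : bdiag_mx 1%:M 1 = 1%:M.
Proof.
apply/matrixP => i j; rewrite [RHS]mxE.
case: (unliftP ord_max i) => [a|] ->; case: (unliftP ord_max j) => [b|] ->.
- by rewrite bdiag_mx_lift mxE (inj_eq lift_inj).
- by rewrite bdiag_mx_lift_max lift_eqF.
- by rewrite bdiag_mx_max_lift eq_liftF.
- by rewrite bdiag_mx_max eqxx.
Qed.

Lemma mul_bdiag Q R c d : bdiag_mx Q c *m bdiag_mx R d = bdiag_mx (Q *m R) (c * d).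
Proof.
apply/matrixP => i j; rewrite mxE (bigD1_ord ord_max) //=.
case: (unliftP ord_max i) => [a|] ->; case: (unliftP ord_max j) => [b|] ->.
- rewrite bdiag_mx_lift_max mul0r add0r bdiag_mx_lift mxE.
  by apply: eq_bigr => k _; rewrite !bdiag_mx_lift.
- rewrite !bdiag_mx_lift_max mul0r add0r big1 // => k _.
  by rewrite bdiag_mx_lift_max mulr0.
- rewrite !bdiag_mx_max_lift mulr0 add0r big1 // => k _.
  by rewrite bdiag_mx_max_lift mul0r.
- rewrite !bdiag_mx_max big1 ?addr0 // => k _.
  by rewrite bdiag_mx_max_lift mul0r.
Qed.

Lemma corner_mx_bijective_on (G : 'M[F]_n -> Prop) (H : 'M[F]_m -> Prop) c :
    (forall A, G A <-> exists2 Q, H Q & A = bdiag_mx Q c) ->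
  [/\ forall A, G A -> H (corner_mx A),
      forall A B, G A -> G B -> corner_mx A = corner_mx B -> A = B
    & forall Q, H Q -> exists A, G A /\ corner_mx A = Q].
Proof.
move=> GE; split.
- by move=> A /GE[Q HQ ->]; rewrite corner_bdiag.
- by move=> A B /GE[Q _ ->] /GE[R _ ->]; rewrite !corner_bdiag => ->.
- move=> Q HQ; exists (bdiag_mx Q c); rewrite corner_bdiag; split=> //.
  by apply/GE; exists Q.
Qed.

Section Automorphism.
Variable A : 'M[F]_n.
Hypotheses (m_gt0 : (0 < m)%N) (Aaut : is_automorphism A).

Let Amul (x y : 'cV[F]_n) :
  x ord_max 0 *: (A *m y) + (x^T *m y) 0 0 *: (A *m e)
  = (A *m x) ord_max 0 *: (A *m y) + ((A *m x)^T *m (A *m y)) 0 0 *: e.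
Proof. by rewrite -mulmx_In_mul Aaut.2 In_mulE. Qed.

(* Otherwise e_n e_k = e_k kills the first n - 1 entries of every A e_k with
   k < n, then e_1 e_1 = e_n kills those of A e_n, and row 1 of A vanishes. *)
Lemma automorphism_max_max : A ord_max ord_max = 1.
Proof.
have [//|a_neq1] := eqVneq (A ord_max ord_max) 1.
pose k0 : 'I_m := Ordinal m_gt0.
have AV0 i k : A (lift ord_max i) (lift ord_max k) = 0.
  have /matrixP/(_ (lift ord_max i) 0) := Amul e (ebas F (lift ord_max k)).
  rewrite dot_ebasr !mulmx_ebas !mxE !eqxx !andbT !lift_eqF.
  rewrite mulr0 addr0 mul1r mul0r addr0 => /eqP.
  rewrite -subr_eq0 -{1}[A _ _]mul1r -mulrBl mulf_eq0 subr_eq0 eq_sym.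
  by rewrite (negPf a_neq1) => /eqP.
have AVmax0 i : A (lift ord_max i) ord_max = 0.
  have /matrixP/(_ (lift ord_max i) 0) :=
    Amul (ebas F (lift ord_max k0)) (ebas F (lift ord_max k0)).
  rewrite dot_ebasr !mulmx_ebas !mxE !eqxx !andbT eq_liftF !lift_eqF.
  by rewrite mul0r add0r mul1r mulr0 addr0 AV0 mulr0.
have : row (lift ord_max k0) A = 0.
  apply/matrixP => i j; rewrite !mxE.
  by case: (unliftP ord_max j) => [j'|] ->; [exact: AV0 | exact: AVmax0].
rewrite rowE => /(congr1 (mulmx^~ (invmx A))); rewrite mulmxK ?Aaut.1 // mul0mx.
by move/matrixP/(_ 0 (lift ord_max k0)); rewrite !mxE !eqxx => /eqP; rewrite oner_eq0.
Qed.

Lemma automorphism_fixes_e : A *m e = e.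
Proof.
have Ae_max : (A *m e) ord_max 0 = 1 by rewrite mulmx_ebas mxE automorphism_max_max.
have Ae_iso : A *m e = ((A *m e)^T *m (A *m e)) 0 0 *: e.
  apply: (@addrI _ (A *m e)); move: (Amul e e).
  by rewrite dot_ebasr Ae_max ebasE eqxx !scale1r.
rewrite {1}Ae_iso -[RHS]scale1r; congr (_ *: _).
by move: Ae_max; rewrite {1}Ae_iso mxE ebasE eqxx mulr1.
Qed.

Lemma automorphism_orthogonal : A^T *m A = 1%:M.
Proof.
have Ae := automorphism_fixes_e.
have Ax_max (x : 'cV[F]_n) : (A *m x) ord_max 0 = x ord_max 0.
  by move: (Amul e x); rewrite Ae !dot_ebasl ebasE eqxx => /addrI/scale_ebasI/esym.
apply: form_inj => x y; rewrite mulmx1.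
move: (Amul x y); rewrite Ae Ax_max => /addrI/scale_ebasI ->.
by rewrite trmx_mul !mulmxA.
Qed.

End Automorphism.

Lemma automorphismP (A : 'M[F]_n) : (0 < m)%N ->
  is_automorphism A <-> [/\ A *m e = e, A^T *m e = e & A^T *m A = 1%:M].
Proof.
move=> m_gt0; split=> [Aaut | [Ae Ate AtA]].
  have Ae := automorphism_fixes_e m_gt0 Aaut.
  have AtA := automorphism_orthogonal m_gt0 Aaut.
  by split=> //; rewrite -{1}Ae mulmxA AtA mul1mx.
split; first by case: (mulmx1_unit AtA).
have Ax_max (x : 'cV[F]_n) : (A *m x) ord_max 0 = x ord_max 0.
  by rewrite -!dot_ebasl mulmxA -[e^T *m A]trmxK trmx_mul trmxK Ate.
move=> x y; rewrite mulmx_In_mul !In_mulE Ae Ax_max.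
by rewrite trmx_mul mulmxA -(mulmxA _ A^T) AtA mulmx1.
Qed.

Lemma automorphismE (A : 'M[F]_n) : (0 < m)%N ->
  is_automorphism A <-> exists2 Q, is_orth_mx Q & A = bdiag_mx Q 1.
Proof.
move=> m_gt0; split=> [/(automorphismP _ m_gt0)[Ae Ate AtA] | [Q [_ QtQ] ->]]; last first.
  apply/automorphismP => //.
  by rewrite trmx_bdiag !bdiag_mx_ebas scale1r mul_bdiag QtQ mulr1 bdiag_mx1.
have AQ : A = bdiag_mx (corner_mx A) 1 by apply: bdiag_corner; rewrite scale1r.
have QtQ : (corner_mx A)^T *m corner_mx A = 1%:M.
  move: AtA; rewrite {1 2}AQ trmx_bdiag mul_bdiag mulr1 -bdiag_mx1.
  by move/(congr1 corner_mx); rewrite !corner_bdiag.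
by exists (corner_mx A) => //; split=> //; apply: mulmx1C.
Qed.

Section Derivation.
Hypothesis two_neq0 : (2%:R : F) != 0.

Lemma double_eq0 (x : F) : x + x = 0 -> x = 0.
Proof.
by move/eqP; rewrite -mulr2n -mulr_natr mulf_eq0 (negPf two_neq0) orbF => /eqP.
Qed.

Variable D : 'M[F]_n.
Hypothesis Dder : is_derivation D.

Let Dmul (x y : 'cV[F]_n) :
  x ord_max 0 *: (D *m y) + (x^T *m y) 0 0 *: (D *m e)
  = ((D *m x) ord_max 0 *: y + ((D *m x)^T *m y) 0 0 *: e)
    + (x ord_max 0 *: (D *m y) + (x^T *m (D *m y)) 0 0 *: e).
Proof. by rewrite -mulmx_In_mul Dder !In_mulE. Qed.

(* Applying D to e_n e_n = 2 e_n gives D e_n = 3d e_n, where d is the last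
   entry of D e_n; hence 2d = 0. *)
Lemma derivation_kills_e : D *m e = 0.
Proof.
set d := (D *m e) ord_max 0.
have De3 : D *m e = (d + d + d) *: e.
  apply: (@addrI _ (D *m e)); move: (Dmul e e).
  by rewrite !dot_ebasr dot_ebasl ebasE eqxx !scale1r => ->; rewrite addrCA -!scalerDl.
have d0 : d = 0.
  apply: double_eq0; apply: (@addIr _ d).
  by rewrite add0r [in RHS]/d [in RHS]De3 [in RHS]mxE ebasE eqxx mulr1.
by rewrite De3 d0 !addr0 scale0r.
Qed.

Lemma derivation_skew : D^T = - D.
Proof.
have De := derivation_kills_e.
have Dx_max (x : 'cV[F]_n) : (D *m x) ord_max 0 = 0.
  apply: double_eq0; apply: (@scale_ebasI ord_max); move: (Dmul x e).
  have -> : (x^T *m (D *m e)) 0 0 = 0 by rewrite De mulmx0 mxE.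
  rewrite De !dot_ebasr !scaler0 !add0r !scale0r addr0 -scalerDl.
  by move=> <-.
apply: form_inj => x y.
rewrite mulmxN mulNmx [RHS]mxE -trmx_mul -mulmxA; apply/eqP; rewrite -addr_eq0.
apply/eqP/(@scale_ebasI ord_max); rewrite scalerDl scale0r.
apply: (@addrI _ (x ord_max 0 *: (D *m y))); rewrite addr0.
by move: (Dmul x y); rewrite De Dx_max scaler0 addr0 scale0r add0r addrCA => /esym.
Qed.

End Derivation.

Lemma derivationP (D : 'M[F]_n) : (2%:R : F) != 0 ->
  is_derivation D <-> D *m e = 0 /\ D^T = - D.
Proof.
move=> two_neq0; split=> [Dder | [De Dskew]].
  by split; [exact: derivation_kills_e | exact: derivation_skew].
have Dx_max (x : 'cV[F]_n) : (D *m x) ord_max 0 = 0.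
  rewrite -dot_ebasl mulmxA -[e^T *m D]trmxK trmx_mul trmxK Dskew mulNmx De.
  by rewrite oppr0 trmx0 mul0mx mxE.
move=> x y; rewrite mulmx_In_mul !In_mulE De scaler0 addr0 Dx_max scale0r add0r.
have -> : ((D *m x)^T *m y) 0 0 = - (x^T *m (D *m y)) 0 0.
  by rewrite trmx_mul Dskew mulmxN mulNmx mxE mulmxA.
by rewrite addrCA -scalerDl addNr scale0r addr0.
Qed.

Lemma derivationE (D : 'M[F]_n) : (2%:R : F) != 0 ->
  is_derivation D <-> exists2 S, is_skew_mx S & D = bdiag_mx S 0.
Proof.
move=> two_neq0; split=> [/(derivationP _ two_neq0)[De Dskew] | [S S_skew ->]]; last first.
  apply/derivationP => //.
  by rewrite bdiag_mx_ebas scale0r trmx_bdiag S_skew -bdiag_mxN oppr0.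
exists (corner_mx D); first by rewrite /is_skew_mx trmx_corner Dskew linearN.
by apply: bdiag_corner; rewrite ?Dskew ?mulNmx De ?oppr0 scale0r.
Qed.

End InAlgebra.

Theorem theorem1 (F : fieldType) (m : nat) (hF : (2%:R : F) != 0) (hm : (0 < m)%N) :
  (exists phi : 'M[F]_(m.+1) -> 'M[F]_m,
     group_iso (@is_automorphism F m) (@is_orth_mx F m) phi) /\
  (exists psi : 'M[F]_(m.+1) -> 'M[F]_m,
     lie_iso (@is_derivation F m) (@is_skew_mx F m) psi).
Proof.
have autE (A : 'M[F]_m.+1) := automorphismE A hm.
have derE (D : 'M[F]_m.+1) := derivationE D hF.
split; exists (@corner_mx F m).
- have [into inj onto] := corner_mx_bijective_on autE.
  do 3!split=> //; move=> A B /autE[Q _ ->] /autE[R _ ->].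
  by rewrite mul_bdiag mulr1 !corner_bdiag.
- have [into inj onto] := corner_mx_bijective_on derE.
  do 4!split=> //; first by move=> a A B _ _; rewrite linearP.
  move=> A B /derE[S _ ->] /derE[T _ ->].
  by rewrite /lie_bracket !mul_bdiag linearB /= !corner_bdiag.
Qed.
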